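(* Let $n\ge1$, $b\in\mathbb{Z}$, $P_b:\{0,1,\dots,2^n\}\to\mathbb{Z}$, $d(x)=P_b(x)-bx$, let $\epsilon_0$ be the fraction of $x\in D_n$ with $d(x)\ne0$, let $\beta>0$ and $0<\alpha<1$. Assume that the fraction of $x\in D_n$ with $d(x)>0$ and the fraction with $d(x)<0$ are each greater than $\epsilon_0/2-\beta$. If $x\in D_n$ is good, then RandSplit$(x,b,P_b)$ outputs FAIL with probability at least $\epsilon_0/2-\beta-\frac1\alpha(\epsilon_0/2)^2$.
   Context: $D_n=\{0,1,\dots,2^n-1\}$; Rand$(0,2^n)$ is a uniformly random element of $D_n$. For $x,x_1\in D_n$, $\delta_x(x_1)=1$ if $d(x_1)>0$ and $d((x-x_1)\bmod 2^n)<0$, and $\delta_x(x_1)=0$ otherwise; the number of opposite-sign matches of $x$ is $\sum_{x_1\in D_n}\delta_x(x_1)$, and $x$ is good if this number is at most $\frac1\alpha(\epsilon_0/2)^2 2^n$. RandSplit$(x,b,P)$: choose $x_1\leftarrow$ Rand$(0,2^n)$; set $\delta=0$ if $x_1<x$ and $\delta=1$ otherwise; set $x_2=\delta\cdot 2^n+x-x_1$; if $P(x_1)+P(x_2)\ne b\cdot\delta\cdot 2^n+P(x)$ return FAIL, else return PASS. *)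

From HB Require Import structures.
From mathcomp Require Import all_boot all_order all_algebra.
Set Implicit Arguments. Unset Strict Implicit. Unset Printing Implicit Defensive.
Import Order.TTheory GRing.Theory Num.Theory.
Local Open Scope ring_scope.

(* D_n = {0,...,2^n - 1} is represented by iota 0 (2^n).
   P : nat -> int; only its values on {0,...,2^n} are ever used. *)

Definition dev (b : int) (P : nat -> int) (x : nat) : int := P x - b * x%:Z.

Definition cntD (n : nat) (p : pred nat) : nat := count p (iota 0 (2 ^ n)).

Definition fracD (R : realFieldType) (n : nat) (p : pred nat) : R :=
  (cntD n p)%:R / (2 ^ n)%:R.

Definition eps0 (R : realFieldType) (n : nat) (b : int) (P : nat -> int) : R :=
  fracD R n (fun x => dev b P x != 0).

(* number of opposite-sign matches of x: #{x1 in D_n | d(x1) > 0 /\ d((x - x1) mod 2^n) < 0}.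
   For x, x1 in D_n, (x - x1) mod 2^n (integer mod) equals (x + 2^n - x1) %% 2^n in nat. *)
Definition opp_matches (n : nat) (b : int) (P : nat -> int) (x : nat) : nat :=
  cntD n (fun x1 => (0 < dev b P x1) && (dev b P ((x + 2 ^ n - x1) %% 2 ^ n)%N < 0)).

Definition good (R : realFieldType) (n : nat) (b : int) (P : nat -> int)
  (alpha : R) (x : nat) : Prop :=
  (opp_matches n b P x)%:R <= alpha^-1 * (eps0 R n b P / 2) ^+ 2 * (2 ^ n)%:R.

Definition randsplit_fails (n : nat) (b : int) (P : nat -> int) (x x1 : nat) : bool :=
  let delta : nat := if (x1 < x)%N then 0%N else 1%N in
  let x2 : nat := (delta * 2 ^ n + x - x1)%N in
  P x1 + P x2 != b * (delta * 2 ^ n)%N%:Z + P x.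

Definition fail_prob (R : realFieldType) (n : nat) (b : int) (P : nat -> int) (x : nat) : R :=
  fracD R n (randsplit_fails n b P x).

From HB Require Import structures.
From mathcomp Require Import all_boot all_order all_algebra zify ring lra.
Import Order.TTheory GRing.Theory Num.Theory.
Set Implicit Arguments.
Unset Strict Implicit.
Local Open Scope ring_scope.

(* Write [N = 2^n] and [x2 = (x - x1) mod N] for the partner of [x1].  When
   RandSplit passes at [x1 <> x], linearity of [b * _] turns the checked
   identity into [d(x1) + d(x2) = d(x)].  If [d(x) >= 0], every [x1] with
   [d(x1) < 0] either fails or has [d(x2) > 0], i.e. is an opposite-sign match
   of [x] once [x1] is replaced by its partner, an involution of [D_n].
   Symmetrically, if [d(x) < 0] every [x1] with [d(x1) > 0] fails or is a
   match.  Hence the failures plus the matches outnumber the points of one of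
   the two signs, which both have density above [eps0/2 - beta], and [x] good
   bounds the matches by [alpha^-1 (eps0/2)^2 N]. *)

Lemma count_le_addn_in (T : eqType) (a b c : pred T) (s : seq T) :
  {in s, forall i, a i -> b i || c i} -> (count a s <= count b s + count c s)%N.
Proof.
move=> abc; rewrite -count_predUI (leq_trans _ (leq_addr _ _)) //.
rewrite (@eq_in_count _ a (predI a (predU b c))); first by apply: sub_count => i /andP[].
by move=> i si /=; case ai: (a i) => //; rewrite abc.
Qed.

Lemma count_iota_involution (N : nat) (f : nat -> nat) (p : pred nat) :
    {in gtn N, forall y, f y < N}%N -> {in gtn N, involutive f} ->
  count (p \o f) (iota 0 N) = count p (iota 0 N).
Proof.
move=> fN fK; rewrite -count_map; apply/permP/uniq_perm; rewrite ?iota_uniq //.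
  rewrite map_inj_in_uniq ?iota_uniq // => u v; rewrite !mem_iota /= => uN vN fuv.
  by rewrite -(fK u uN) fuv fK.
move=> z; rewrite mem_iota /=; apply/mapP/idP => [[w] | zN].
  by rewrite mem_iota /= => wN ->; apply: fN.
by exists (f z); rewrite ?mem_iota /= ?fN ?fK.
Qed.

Section ModularPartner.

Variables N x : nat.
Hypothesis xN : (x < N)%N.

Lemma modn_subDn_cases (y : nat) : (y < N)%N ->
  ((x + N - y) %% N = if y <= x then x - y else x + N - y)%N.
Proof.
move=> yN; case: leqP => yx; last by rewrite modn_small //; lia.
by rewrite -addnBAC // modnDr modn_small //; lia.
Qed.

Lemma modn_subDn_lt (y : nat) : ((x + N - y) %% N < N)%N.
Proof. by rewrite ltn_pmod //; lia. Qed.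

Lemma modn_subDnK (y : nat) : (y < N)%N -> ((x + N - (x + N - y) %% N) %% N = y)%N.
Proof.
move=> yN; rewrite (modn_subDn_cases yN).
by case: (leqP y x) => yx; rewrite modn_subDn_cases; try case: leqP; lia.
Qed.

End ModularPartner.

Section CountSign.

Variables (n : nat) (b : int) (P : nat -> int) (x : nat).
Hypothesis xN : (x < 2 ^ n)%N.

(* For [x1 = x] RandSplit compares with [P(2^n)] rather than [P(0)]. *)
Lemma randsplit_pass_dev x1 : (x1 < 2 ^ n)%N -> x1 != x ->
    ~~ randsplit_fails n b P x x1 ->
  dev b P x1 + dev b P ((x + 2 ^ n - x1) %% 2 ^ n)%N = dev b P x.
Proof.
move=> x1N x1x; rewrite /randsplit_fails negbK => /eqP pass.
set D := ((if (x1 < x)%N then 0%N else 1%N) * 2 ^ n)%N in pass.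
set x2 := (D + x - x1)%N in pass.
have -> : ((x + 2 ^ n - x1) %% 2 ^ n)%N = x2.
  by rewrite modn_subDn_cases // /x2 /D; case: (ltnP x1 x) => ?; case: leqP; lia.
have sum_x1x2 : x1%:Z + x2%:Z = D%:Z + x%:Z.
  by rewrite -!PoszD; congr Posz; rewrite /x2 /D; case: (ltnP x1 x) => ?; lia.
rewrite /dev; transitivity (P x1 + P x2 - b * (x1%:Z + x2%:Z)); first ring.
by rewrite pass sum_x1x2; ring.
Qed.

Lemma cntD_neg_le_fails_matches : 0 <= dev b P x ->
  (cntD n (fun y => (dev b P y < 0)%R)
     <= cntD n (randsplit_fails n b P x) + opp_matches n b P x)%N.
Proof.
move=> dx_ge0; rewrite /opp_matches /cntD.
set partner := fun y => ((x + 2 ^ n - y) %% 2 ^ n)%N.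
rewrite -(@count_iota_involution _ partner
  (fun y => (0 < dev b P y) && (dev b P (partner y) < 0))); last first.
- by move=> y yN; apply: modn_subDnK.
- by move=> y _; apply: modn_subDn_lt.
apply: count_le_addn_in => i; rewrite mem_iota /= add0n => iN di_lt0.
case fail_i: (randsplit_fails n b P x i) => //=.
have ix : i != x by apply: contraTneq di_lt0 => ->; rewrite -leNgt.
have := randsplit_pass_dev iN ix (negbT fail_i).
by rewrite /partner modn_subDnK // di_lt0 andbT => split_eq; lia.
Qed.

Lemma cntD_pos_le_fails_matches : dev b P x < 0 ->
  (cntD n (fun y => (0 < dev b P y)%R)
     <= cntD n (randsplit_fails n b P x) + opp_matches n b P x)%N.
Proof.
move=> dx_lt0; apply: count_le_addn_in => i; rewrite mem_iota /= add0n => iN di_gt0.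
case fail_i: (randsplit_fails n b P x i) => //=.
have ix : i != x by apply: contraTneq di_gt0 => ->; rewrite -leNgt ltW.
have := randsplit_pass_dev iN ix (negbT fail_i).
by rewrite di_gt0 /= => split_eq; lia.
Qed.

End CountSign.

Lemma fracD_le_fail_prob_add_matches (R : realFieldType) n b P x (p : pred nat) :
    (cntD n p <= cntD n (randsplit_fails n b P x) + opp_matches n b P x)%N ->
  fracD R n p <= fail_prob R n b P x + (opp_matches n b P x)%:R / (2 ^ n)%:R.
Proof.
rewrite /fail_prob /fracD -mulrDl -natrD ler_pM2r ?ler_nat //.
by rewrite invr_gt0 ltr0n expn_gt0.
Qed.

Lemma good_matches_frac_le (R : realFieldType) n b P (alpha : R) x : good n b P alpha x ->
  (opp_matches n b P x)%:R / (2 ^ n)%:R <= alpha^-1 * (eps0 R n b P / 2) ^+ 2.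
Proof. by rewrite ler_pdivrMr // ltr0n expn_gt0. Qed.

Theorem mainTheorem8 (R : realFieldType) (n : nat) (b : int) (P : nat -> int)
    (beta alpha : R) (x : nat) :
  (1 <= n)%N ->
  0 < beta -> 0 < alpha -> alpha < 1 ->
  eps0 R n b P / 2 - beta < fracD R n (fun y => 0 < dev b P y) ->
  eps0 R n b P / 2 - beta < fracD R n (fun y => dev b P y < 0) ->
  (x < 2 ^ n)%N ->
  good n b P alpha x ->
  eps0 R n b P / 2 - beta - alpha^-1 * (eps0 R n b P / 2) ^+ 2 <= fail_prob R n b P x.
Proof.
move=> _ _ _ _ pos_dense neg_dense xN /good_matches_frac_le.
set c := alpha^-1 * _; have [dx_ge0 | dx_lt0] := lerP 0 (dev b P x).
- by have := fracD_le_fail_prob_add_matches R (cntD_neg_le_fails_matches xN dx_ge0); lra.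
- by have := fracD_le_fail_prob_add_matches R (cntD_pos_le_fails_matches xN dx_lt0); lra.
Qed.
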